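(* Let $N\ge1$, $c_1,c_2\in\mathbb{R}$ with $2Nc_1\in\mathbb{Z}$, and let integers $\tilde k,\tilde l$ be given; set $\tilde m=\tilde k-2Nc_1\tilde l$. For $\bar m=0,\dots,N-1$ define $$\mathcal{E}(\bar m,\tilde m)=e^{j\frac{2\pi}{N}\left(\bar m\tilde l+Nc_2\left((\bar m+\tilde m)_N^2-\bar m^2\right)\right)},\quad \mathbf{P}=\operatorname{diag}\big(\mathcal{E}^*(\bar m,\tilde m),\ \bar m=0,\dots,N-1\big),$$ and the MD-CDDS-AFDM precoder $\mathbf{C}=\boldsymbol{\Pi}_N^{\tilde m}\mathbf{P}$. For $\mathbf{x}\in\mathbb{C}^N$ let $\mathbf{x}'=\mathbf{C}\mathbf{x}$. For integer paths $(k_i,l_i)$ and gains $h_i$, $i=1,\dots,P$, define the (noise-free) AFDM output $$y[m]=\sum_{i=1}^P h_i e^{j\frac{2\pi}{N}\left(Nc_1l_i^2-m'_il_i+Nc_2(m_i'^2-m^2)\right)}x'[m'_i],\quad m'_i=(m+\operatorname{ind}_i)_N,\ \operatorname{ind}_i=(2Nc_1l_i-k_i)_N.$$ Then for every $m=0,\dots,N-1$, $$y[m]=\sum_{i=1}^P \bar h_i\, e^{j\frac{2\pi}{N}\left(Nc_1\bar l_i^2-\bar m_i\bar l_i+Nc_2(\bar m_i^2-m^2)\right)}x[\bar m_i],\qquad \bar m_i=(m+\overline{\operatorname{ind}}_i)_N,$$ where $\bar k_i=k_i+\tilde k$, $\bar l_i=l_i+\tilde l$, $\overline{\operatorname{ind}}_i=(2Nc_1\bar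 l_i-\bar k_i)_N$, and $\bar h_i=h_i\,e^{-j\frac{2\pi}{N}\left(Nc_1(2l_i\tilde l+\tilde l^2)+\tilde m l_i\right)}$. In particular, MD-CDDS in AFDM is equivalent to shifting every path by $(\tilde k,\tilde l)$ in the AFDM input-output relation, with a unit-modulus gain change that does not depend on the symbol index.
   Context: $\boldsymbol{\Pi}_N$ is the $N\times N$ forward cyclic-shift matrix, $(\boldsymbol{\Pi}_N\mathbf{v})[n]=v[(n-1)_N]$ (for negative exponents, its inverse powers); $(\cdot)_N$ denotes reduction modulo $N$ into $\{0,\dots,N-1\}$; $^*$ denotes complex conjugation. The displayed formula for $y[m]$ is the discrete affine Fourier transform (DAFT) domain input-output relation of AFDM with chirp parameters $c_1,c_2$ over a doubly selective channel with integer normalized delays $l_i$ and Doppler shifts $k_i$. *)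

From HB Require Import structures.
From mathcomp Require Import all_boot all_order all_algebra.
From mathcomp Require Import reals trigo complex.
Unset Printing Implicit Defensive.
Import Order.TTheory GRing.Theory Num.Theory.
Local Open Scope ring_scope.

Section AFDM.
Variable R : realType.
Local Notation C := R[i].

Definition cexpj (t : R) : C := Complex (cos t) (sin t).

Definition modN (n : nat) (z : int) : 'I_n.+1 := inord `|(z %% n.+1%:Z)%Z|%N.

(* forward cyclic shift: (Pi v)[i] = v[(i-1)_N], i.e. Pi i j = [i == j+1 mod N] *)
Definition cshift (n : nat) : 'M[C]_n.+1 :=
  \matrix_(i, j) (i == modN n (j%:Z + 1))%:R.

(* AFDM noise-free DAFT-domain output, N = n.+1, paths i < P with Doppler k i,
   delay l i, gain h i. The integer a stands for 2 N c1 (assumed integer). *)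
Definition afdm_out (n : nat) (c1 c2 : R) (a : int) (P : nat)
  (h : 'I_P -> C) (k l : 'I_P -> int) (xv : 'cV[C]_n.+1) (m : 'I_n.+1) : C :=
  let N := n.+1%:R : R in
  \sum_(i < P)
    let ind := modN n (a * l i - k i) in
    let m' := modN n (m%:Z + ind%:Z) in
    h i * cexpj (2 * pi / N *
        (N * c1 * (l i)%:~R ^+ 2 - (m' : nat)%:R * (l i)%:~R
         + N * c2 * ((m' : nat)%:R ^+ 2 - (m : nat)%:R ^+ 2)))
        * xv m' 0.

Definition Ephase (n : nat) (c2 : R) (lt mt : int) (mb : 'I_n.+1) : C :=
  let N := n.+1%:R : R in
  cexpj (2 * pi / N * ((mb : nat)%:R * lt%:~R
         + N * c2 * (((modN n (mb%:Z + mt)) : nat)%:R ^+ 2 - (mb : nat)%:R ^+ 2))).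

Definition precoder (n : nat) (c2 : R) (lt mt : int) : 'M[C]_n.+1 :=
  cshift n ^ mt *m diag_mx (\row_mb conjc (Ephase n c2 lt mt mb)).

End AFDM.
Arguments cexpj {R}.
Arguments afdm_out {R}.
Arguments precoder {R}.

(** Precoding by [C = Pi^mt P] picks, at output index [m' = (m + ind)_N] of
    path [i], the input symbol [x[mb]] with [mb = (m' - mt)_N]; since
    [mt = kt - 2 N c1 lt] this is exactly the index [(m + ind_bar)_N] of the
    shifted path. The phases then match up to [exp(j 2 pi l q)] with [q] the
    integer wrap-around [(m' - mt - mb) / N], a trivial factor. *)
From HB Require Import structures.
From mathcomp Require Import all_boot all_order all_algebra.
From mathcomp Require Import reals trigo complex.
From mathcomp Require Import ring.
Import Order.TTheory GRing.Theory Num.Theory.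
Local Open Scope ring_scope.

Section ComplexExponential.
Variable R : realType.

Lemma cexpjD (s t : R) : cexpj (s + t) = cexpj s * cexpj t.
Proof. by rewrite /cexpj cosD sinD /=; congr Complex; ring. Qed.

Lemma conjc_cexpj (t : R) : conjc (cexpj t) = cexpj (- t).
Proof. by rewrite /cexpj cosN sinN. Qed.

Lemma cexpjDn (t : R) (k : nat) : cexpj (t + pi *+ 2 *+ k) = cexpj t.
Proof. by rewrite /cexpj (periodicn (@cosD2pi R)) (periodicn (@sinD2pi R)). Qed.

Lemma cexpjDz (t : R) (z : int) : cexpj (t + 2 * pi * z%:~R) = cexpj t.
Proof.
have pi2n (k : nat) : 2 * pi * k%:R = pi *+ 2 *+ k :> R by ring.
case: z => k; first by rewrite pi2n cexpjDn.
rewrite NegzE intrN mulrN -{2}(subrK (pi *+ 2 *+ k.+1) t) cexpjDn.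
by rewrite pi2n.
Qed.

End ComplexExponential.

Section ModularIndices.
Variable n : nat.
Local Notation N := n.+1.

Lemma val_modN (z : int) : (modN n z : nat)%:Z = (z %% N)%Z.
Proof.
rewrite /modN inordK; first by rewrite gez0_abs // modz_ge0.
by rewrite -ltz_nat gez0_abs ?modz_ge0 // ltz_pmod.
Qed.

Lemma eq_modN (z1 z2 : int) : (z1 = z2 %[mod N])%Z -> modN n z1 = modN n z2.
Proof. by rewrite /modN => ->. Qed.

Lemma modN_ord (j : 'I_N) : modN n j = j.
Proof.
apply/val_inj/eqP; rewrite /= -eqz_nat val_modN modz_small //.
by rewrite ltz_nat ltn_ord.
Qed.

Lemma eq_ord_modN (j : 'I_N) (z : int) : (j == modN n z) = (j%:Z == z %[mod N])%Z.
Proof.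
rewrite -(inj_eq val_inj) /= -eqz_nat val_modN.
by rewrite -{1}(@modz_small j N) // ltz_nat ltn_ord.
Qed.

Lemma modN_subK (j : 'I_N) (z : int) : modN n ((modN n (j%:Z - z))%:Z + z) = j.
Proof.
rewrite -[RHS]modN_ord; apply: eq_modN.
by rewrite val_modN modzDml subrK.
Qed.

Lemma modN_addmr (j : 'I_N) (d e : int) :
  modN n (j%:Z + modN n (d + e)) = modN n ((modN n (j%:Z + modN n d))%:Z + e).
Proof.
apply: eq_modN; rewrite !val_modN modzDmr modzDml -addrA.
by rewrite -[in RHS]modzDmr modzDml modzDmr.
Qed.

Lemma natr_modN (T : pzRingType) (z : int) :
  (modN n z : nat)%:R = z%:~R - (z %/ N)%Z%:~R * N%:R :> T.
Proof.
have -> : (modN n z : nat)%:R = (modN n z : nat)%:Z%:~R :> T by [].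
by rewrite val_modN /modz intrB intrM.
Qed.

End ModularIndices.

Section Precoder.
Variable R : realType.
Variable n : nat.
Local Notation N := n.+1.
Local Notation C := R[i].

Definition shiftmx (z : int) : 'M[C]_N :=
  \matrix_(i, j) (i == modN n (j%:Z + z))%:R.

Lemma mul_shiftmx (s t : int) : shiftmx s *m shiftmx t = shiftmx (t + s).
Proof.
apply/matrixP => i j; rewrite !mxE (bigD1 (modN n (j%:Z + t))) //= big1 ?addr0.
  rewrite !mxE eqxx mulr1; congr (_ == _)%:R; apply: eq_modN.
  by rewrite val_modN modzDml addrA.
by move=> j' /negbTE nj'; rewrite !mxE nj' mulr0.
Qed.

Lemma shiftmx0 : shiftmx 0 = 1%:M.
Proof. by apply/matrixP => i j; rewrite !mxE addr0 modN_ord. Qed.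

Lemma cshift_exprz (z : int) : cshift R n ^ z = shiftmx z.
Proof.
have cshift_exprn (k : nat) : cshift R n ^+ k = shiftmx k.
  elim: k => [|k IH]; first by rewrite expr0 shiftmx0.
  rewrite exprS IH -mulmxE.
  have -> : cshift R n = shiftmx 1 by apply/matrixP => i j; rewrite !mxE.
  by rewrite mul_shiftmx -PoszD addn1.
case: z => k; first exact: cshift_exprn.
rewrite /exprz cshift_exprn NegzE.
have shiftmxV : shiftmx (- k.+1%:Z) * shiftmx k.+1 = 1.
  by rewrite -mulmxE mul_shiftmx subrr shiftmx0.
have [_ unit_shift] := mulmx1_unit shiftmxV.
by rewrite -[LHS]mul1r -shiftmxV -mulrA mulrV // mulr1.
Qed.

Lemma precoder_entry (c2 : R) (lt mt : int) (x : 'cV[C]_N) (j : 'I_N) :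
  let mb := modN n (j%:Z - mt) in
  (precoder n c2 lt mt *m x) j 0 = conjc (Ephase R n c2 lt mt mb) * x mb 0.
Proof.
have shift_swap (j' : 'I_N) : (j == modN n (j'%:Z + mt)) = (j' == modN n (j%:Z - mt)).
  by rewrite !eq_ord_modN -(eqz_modDr mt j') subrK eq_sym.
rewrite /precoder cshift_exprz mul_mx_diag mxE (bigD1 (modN n (j%:Z - mt))) //=.
rewrite big1 ?addr0; first by rewrite !mxE shift_swap eqxx mul1r.
by move=> j' nj'; rewrite !mxE shift_swap (negbTE nj') !mul0r.
Qed.

End Precoder.

Lemma precoded_path_phase (R : realType) (N c1 c2 lt mt m m' mb : R) (l q : int) :
  N != 0 -> mb = m' - mt - q%:~R * N ->
  cexpj (2 * pi / N * (N * c1 * l%:~R ^+ 2 - m' * l%:~R + N * c2 * (m' ^+ 2 - m ^+ 2)))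
  * cexpj (- (2 * pi / N * (mb * lt + N * c2 * (m' ^+ 2 - mb ^+ 2))))
  = cexpj (- (2 * pi / N * (N * c1 * (2 * l%:~R * lt + lt ^+ 2) + mt * l%:~R)))
  * cexpj (2 * pi / N * (N * c1 * (l%:~R + lt) ^+ 2 - mb * (l%:~R + lt)
           + N * c2 * (mb ^+ 2 - m ^+ 2))).
Proof.
move=> N0 ->; rewrite -!cexpjD -[RHS](cexpjDz _ _ (- (l * q))).
by congr cexpj; rewrite intrN intrM; field.
Qed.

Theorem mainTheorem4 (R : realType) (n : nat) (c1 c2 : R) (a : int)
  (ha : 2 * n.+1%:R * c1 = a%:~R) (kt lt : int)
  (P : nat) (h : 'I_P -> R[i]) (k l : 'I_P -> int) (x : 'cV[R[i]]_n.+1)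
  (m : 'I_n.+1) :
  let mt : int := kt - a * lt in
  let x' := precoder n c2 lt mt *m x in
  let kb := fun i : 'I_P => k i + kt in
  let lb := fun i : 'I_P => l i + lt in
  let hb := fun i => h i * cexpj (- (2 * pi / n.+1%:R *
              (n.+1%:R * c1 * (2 * (l i)%:~R * lt%:~R + lt%:~R ^+ 2)
               + mt%:~R * (l i)%:~R))) in
  afdm_out n c1 c2 a P h k l x' m = afdm_out n c1 c2 a P hb kb lb x m.
Proof.
move=> mt x' kb lb hb; apply: eq_bigr => i _ /=.
set m' := modN n (m%:Z + modN n (a * l i - k i)).
have -> : modN n (m%:Z + modN n (a * lb i - kb i)) = modN n (m'%:Z - mt).
  have -> : a * lb i - kb i = a * l i - k i - mt by rewrite /lb /kb /mt; ring.
  exact: modN_addmr.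
rewrite /x' precoder_entry /Ephase modN_subK conjc_cexpj /hb /lb intrD.
have N0 : n.+1%:R != 0 :> R by rewrite pnatr_eq0.
set q := ((m'%:Z - mt) %/ n.+1)%Z.
have mbE : (modN n (m'%:Z - mt) : nat)%:R
           = (m' : nat)%:R - mt%:~R - q%:~R * n.+1%:R :> R.
  by rewrite natr_modN intrB.
rewrite -[in RHS](mulrA (h i)).
rewrite -(precoded_path_phase _ _ _ _ _ _ _ _ _ (l i) q N0 mbE).
by rewrite mulrA [in RHS]mulrA.
Qed.
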